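(* For any simple graph $G$ whose vertices are among the variables of $S=\mathbb{K}[x_1,\dots,x_n]$, $\mathbb{K}$ a field, we have $\operatorname{sreg}(S/I(G))\le\operatorname{cochord}(G)$.
   Context: A graph is chordal if every induced cycle has length 3, and co-chordal if its complement graph is chordal. The co-chordal cover number $\operatorname{cochord}(G)$ is the minimum number of co-chordal subgraphs of $G$ whose edge sets cover $E(G)$. $I(G)=(xy : \{x,y\}\in E(G))$ is the edge ideal. Stanley regularity: for a squarefree monomial ideal $I\subset S$, a squarefree Stanley decomposition of $S/I$ is a decomposition $S/I=\bigoplus_{i=1}^r u_i\mathbb{K}[Z_i]$ as $\mathbb{K}$-vector spaces, where $Z_i\subseteq\{x_1,\dots,x_n\}$, $u_i$ are (images of) squarefree monomials with $\operatorname{supp}(u_i)\subseteq Z_i$, and each $u_i\mathbb{K}[Z_i]$ is free over $\mathbb{K}[Z_i]$. Its Stanley regularity is $\max_i\deg(u_i)$, and $\operatorname{sreg}(S/I)$ is the minimum over all such decompositions. *)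

From mathcomp Require Import all_boot all_algebra.
From mathcomp Require Import mpoly.
Set Implicit Arguments.
Unset Strict Implicit.
Unset Printing Implicit Defensive.
Import GRing.Theory.
Local Open Scope ring_scope.

Definition simple_graph (n : nat) (E : rel 'I_n) : Prop :=
  (forall i j, E i j = E j i) /\ (forall i, ~~ E i i).

Definition subgraph (n : nat) (H E : rel 'I_n) : Prop :=
  forall i j, H i j -> E i j.

Definition compl_graph (n : nat) (E : rel 'I_n) : rel 'I_n :=
  fun i j => (i != j) && ~~ E i j.

Definition induced_cycle (n m : nat) (E : rel 'I_n) (c : 'I_m -> 'I_n) : Prop :=
  [/\ (3 <= m)%N, injective c &
      forall a b : 'I_m,
        E (c a) (c b) = ((a.+1 %% m == b) || (b.+1 %% m == a))%N].

Definition chordal (n : nat) (E : rel 'I_n) : Prop :=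
  forall (m : nat) (c : 'I_m -> 'I_n), induced_cycle E c -> m = 3%N.

Definition cochordal (n : nat) (E : rel 'I_n) : Prop := chordal (compl_graph E).

(* G admits a cover of its edges by k co-chordal subgraphs,
   i.e. cochord(G) <= k is witnessed. *)
Definition cochordal_cover (n : nat) (E : rel 'I_n) (k : nat)
    (H : 'I_k -> rel 'I_n) : Prop :=
  (forall l, simple_graph (H l) /\ subgraph (H l) E /\ cochordal (H l)) /\
  (forall i j, E i j -> exists l, H l i j).

Definition in_edge_ideal (K : fieldType) (n : nat) (E : rel 'I_n)
    (f : {mpoly K[n]}) : Prop :=
  exists h : 'I_n -> 'I_n -> {mpoly K[n]},
    f = \sum_(i < n) \sum_(j < n | E i j) h i j * ('X_i * 'X_j).

Definition sqf_monomial (K : fieldType) (n : nat) (U : {set 'I_n}) : {mpoly K[n]} :=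
  \prod_(i in U) 'X_i.

Definition in_subring (K : fieldType) (n : nat) (Z : {set 'I_n})
    (p : {mpoly K[n]}) : Prop :=
  forall m : 'X_{1..n}, m \in msupp p -> forall i : 'I_n, i \notin Z -> m i = 0%N.

(* A squarefree Stanley decomposition S/I(G) = (+)_l u_l K[Z_l], given by
   D : seq of pairs (supp u_l, Z_l) with supp u_l \subset Z_l:
   - (spanning) every f in S is congruent mod I(G) to some sum_l u_l g_l, g_l in K[Z_l];
   - (direct sum of free K[Z_l]-modules) if sum_l u_l g_l lies in I(G) with
     g_l in K[Z_l], then every g_l = 0. *)
Definition stanley_decomposition (K : fieldType) (n : nat) (E : rel 'I_n)
    (D : seq ({set 'I_n} * {set 'I_n})) : Prop :=
  [/\ forall l : 'I_(size D), (nth (set0, set0) D l).1 \subset (nth (set0, set0) D l).2,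
      forall f : {mpoly K[n]}, exists g : 'I_(size D) -> {mpoly K[n]},
        (forall l : 'I_(size D), in_subring (nth (set0, set0) D l).2 (g l)) /\
        in_edge_ideal E (f - \sum_(l : 'I_(size D))
                               sqf_monomial K (nth (set0, set0) D l).1 * g l) &
      forall g : 'I_(size D) -> {mpoly K[n]},
        (forall l : 'I_(size D), in_subring (nth (set0, set0) D l).2 (g l)) ->
        in_edge_ideal E (\sum_(l : 'I_(size D))
                               sqf_monomial K (nth (set0, set0) D l).1 * g l) ->
        forall l : 'I_(size D), g l = 0].

(* Stanley regularity of a decomposition: max degree of the u_l. *)
Definition stanley_reg (n : nat) (D : seq ({set 'I_n} * {set 'I_n})) : nat :=
  \max_(p <- D) #|p.1|.

(* Let H_1, ..., H_k be co-chordal subgraphs covering the edges of G.  The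
   complement of H_l is chordal: a minimal vertex separator of a chordal graph
   is a clique (otherwise two shortest paths through the two sides would close
   up into a chordless cycle of length at least 4), hence by induction every
   chordal graph has a simplicial vertex and thus a perfect elimination order.
   Sending an independent set F of H_l to the interval [{v}, Z v], where v is
   the latest vertex of F and Z v consists of v and its earlier neighbours in
   the complement, partitions the independence complex of H_l into intervals
   [U, Z] with |U| <= 1.  Uniting the U's and intersecting the Z's over l
   partitions the independence complex of G into intervals [U, Z] with
   |U| <= k.  As the monomials outside I(G) are those with independent support,
   S/I(G) is the direct sum of the spaces u_U K[Z] over these intervals. *)

From mathcomp Require Import all_boot all_algebra.
From mathcomp Require Import zify.
From Stdlib Require Import Classical.
Set Implicit Arguments.
Unset Strict Implicit.
Unset Printing Implicit Defensive.

Lemma ex_minimizer (T : Type) (P : T -> Prop) (mu : T -> nat) x :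
  P x -> exists2 y, P y & forall z, P z -> mu y <= mu z.
Proof.
move: {2}(mu x) (leqnn (mu x)) => N; elim: N x => [|N IH] x le_x Px.
  by exists x => // z _; lia.
case: (classic (exists2 z, P z & mu z < mu x)) => [[z Pz lt_z] | no_less].
  by apply: (IH z) => //; lia.
by exists x => // z Pz; rewrite leqNgt; apply/negP => lt_z; apply: no_less; exists z.
Qed.

Section Walks.
Variables (n : nat) (C : rel 'I_n).

Definition walk_via (P : {set 'I_n}) (x y : 'I_n) (L : nat) (f : nat -> 'I_n) :=
  [/\ f 0 = x, f L = y, (forall t, t < L -> C (f t) (f t.+1)) &
      (forall t, 0 < t < L -> f t \in P)].

Definition shortest_walk_via P x y L := forall L' g, walk_via P x y L' g -> L <= L'.

Lemma exists_shortest_walk P x y L f : walk_via P x y L f ->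
  exists L' f', walk_via P x y L' f' /\ shortest_walk_via P x y L'.
Proof.
move=> walk_f.
have [[L' f'] walk' min'] :=
  @ex_minimizer _ (fun Lf => walk_via P x y Lf.1 Lf.2) fst (L, f) walk_f.
by exists L', f'; split => // L'' g walk_g; apply: (min' (L'', g)).
Qed.

Lemma walk_shortcut P x y L f i d : walk_via P x y L f -> i + d <= L ->
  (i + d < L -> C (f i) (f (i + d).+1)) -> (i + d = L -> f i = y) ->
  walk_via P x y (L - d) (fun t => if t <= i then f t else f (t + d)).
Proof.
move=> [f0 fL fC fP] hid hC hy; split.
- by rewrite leq0n.
- case: (leqP (L - d) i) => h; first by rewrite (_ : L - d = i); [apply: hy|]; lia.
  by rewrite (_ : L - d + d = L) //; lia.
- move=> t ht; case: (leqP t i) => h1; case: (leqP t.+1 i) => h2.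
  + by apply: fC; lia.
  + by rewrite (_ : t = i); [apply: hC|]; lia.
  + lia.
  + by rewrite addSn; apply: fC; lia.
- by move=> t /andP [ht1 ht2]; case: (leqP t i) => h1; apply: fP; apply/andP; split; lia.
Qed.

Lemma shortest_walk_chordless P x y L f :
  walk_via P x y L f -> shortest_walk_via P x y L ->
  forall i j, i < j <= L -> C (f i) (f j) = (j == i.+1) /\ f i != f j.
Proof.
move=> hf hmin i j hij; have [_ _ fC _] := hf; split.
  apply/idP/eqP => [hC | ->]; last by apply: fC; lia.
  case: (ltnP i.+1 j) => hj; last by lia.
  have := hmin _ _ (@walk_shortcut P x y L f i (j - i - 1) hf _ _ _).
  rewrite (_ : (i + (j - i - 1)).+1 = j); last by lia.
  move=> /(_ _ (fun=> hC)) short.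
  have : L <= L - (j - i - 1) by apply: short; lia.
  lia.
apply/eqP => fij.
have := hmin _ _ (@walk_shortcut P x y L f i (j - i) hf _ _ _).
rewrite (_ : i + (j - i) = j); last by lia.
have [_ fL _ _] := hf; rewrite fij => short.
have : L <= L - (j - i).
  by apply: short => [|hj|hj]; [lia | apply: fC | rewrite hj].
lia.
Qed.

Lemma walk_length_gt1 P x y L f :
  walk_via P x y L f -> x != y -> ~~ C x y -> 1 < L.
Proof.
case: L => [|[|L]] [f0 fL fC _] // xy; first by rewrite -f0 -fL eqxx in xy.
by rewrite -f0 -fL fC.
Qed.

End Walks.

Section Components.
Variables (n : nat) (C : rel 'I_n).
Hypotheses (C_sym : symmetric C).

Definition induced_rel (X : {set 'I_n}) : rel 'I_n :=
  fun u v => [&& u \in X, v \in X & C u v].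

Definition component (X : {set 'I_n}) a := [set v in X | connect (induced_rel X) a v].

Lemma component_sub (X : {set 'I_n}) a : component X a \subset X.
Proof. by apply/subsetP => v; rewrite inE => /andP []. Qed.

Lemma mem_component (X : {set 'I_n}) a : a \in X -> a \in component X a.
Proof. by move=> aX; rewrite inE aX connect0. Qed.

Lemma component_closed (X : {set 'I_n}) a u v :
  u \in component X a -> v \in X -> C u v -> v \in component X a.
Proof.
rewrite !inE => /andP [uX au] vX Cuv; rewrite vX.
by apply: connect_trans au (connect1 _); rewrite /induced_rel uX vX.
Qed.

Lemma component_walk (X : {set 'I_n}) a u v x y :
  u \in component X a -> v \in component X a -> C x u -> C v y ->
  exists L f, walk_via C X x y L f.
Proof.
rewrite !inE => /andP [uX au] /andP [_ av] Cxu Cvy.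
have sym : connect_sym (induced_rel X).
  by apply: sym_connect_sym => p q; rewrite /induced_rel C_sym andbCA.
have /connectP [p p_path v_last] : connect (induced_rel X) u v.
  by apply: connect_trans av; rewrite sym.
have /(pathP y) step := p_path.
exists (size p).+2, (nth y [:: x, u & p]); split => //.
- by rewrite nth_default.
- case=> [|t] //= ht; case: (ltnP t (size p)) => htp.
    by have /and3P [] := step t htp.
  have -> : t = size p by apply/anti_leq; rewrite htp andbT -ltnS.
  by rewrite [nth y p _]nth_default // (set_nth_default u) // -last_nth -v_last.
- case=> [|[|t]] //= ht.
  by have /and3P [] := step t ht.
Qed.

End Components.

Section Separations.
Variables (n : nat) (C : rel 'I_n).
Hypotheses (C_sym : symmetric C).

Definition separation (W : {set 'I_n}) a b (A B : {set 'I_n}) :=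
  [/\ A \subset W, B \subset W, [disjoint A & B], a \in A /\ b \in B &
      {in A & B, forall u v, ~~ C u v}].

Definition separator (W A B : {set 'I_n}) := W :\: (A :|: B).

Definition min_separation W a b A B := separation W a b A B /\
  forall A' B', separation W a b A' B' -> #|separator W A B| <= #|separator W A' B'|.

Lemma separation_sym W a b A B : separation W a b A B -> separation W b a B A.
Proof.
case=> AW BW AB [aA bB] noAB; split => //; first by rewrite disjoint_sym.
by move=> u v uB vA; rewrite C_sym noAB.
Qed.

Lemma separatorC W A B : separator W A B = separator W B A.
Proof. by rewrite /separator setUC. Qed.

Lemma min_separation_sym W a b A B : min_separation W a b A B -> min_separation W b a B A.
Proof.
case=> /separation_sym sep min; split => // A' B' /separation_sym /min.
by rewrite [separator W B A]separatorC [separator W B' A']separatorC.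
Qed.

Lemma exists_min_separation W a b A0 B0 :
  separation W a b A0 B0 -> exists A B, min_separation W a b A B.
Proof.
move=> sep0; have [[A B] sep min] := @ex_minimizer _ (fun AB => separation W a b AB.1 AB.2)
  (fun AB => #|separator W AB.1 AB.2|) (A0, B0) sep0.
by exists A, B; split => // A' B' sep'; apply: (min (A', B')).
Qed.

Lemma separation_shrink W a b A B s : separation W a b A B ->
  s \in separator W A B -> {in component C A a, forall u, ~~ C s u} ->
  exists A' B', separation W a b A' B' /\ #|separator W A' B'| < #|separator W A B|.
Proof.
move=> sep sS s_far; have [AW BW AB [aA bB] noAB] := sep.
have A1A := component_sub C A a.
set A1 := component C A a in A1A s_far *.
(* B1 consists of B, s and the part of A outside the component of a. *)
pose B1 := W :\: A1 :\: (separator W A B :\ s).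
exists A1, B1; split.
  split.
  - exact: subset_trans A1A AW.
  - by apply/subsetP => v; rewrite !inE => /and3P [].
  - by rewrite disjoints_subset; apply/subsetP => v; rewrite !inE => ->; rewrite !andbF.
  - split; first exact: mem_component.
    by rewrite /separator !inE (subsetP BW b bB) bB (disjointFl AB bB) orbT andbF.
  - move=> u v uA1; rewrite in_setD => /andP [vS]; rewrite in_setD => /andP [vA1 vW].
    apply/negP => Cuv.
    have uA := subsetP A1A u uA1.
    case vA: (v \in A); first by rewrite (component_closed uA1 vA Cuv) in vA1.
    case vB: (v \in B); first by move: (noAB u v uA vB); rewrite Cuv.
    case: (eqVneq v s) => [vs | vns]; first by move: (s_far u uA1); rewrite -vs C_sym Cuv.
    by move: vS; rewrite /separator !inE vns vA vB vW.
apply: leq_ltn_trans (proper_card (properD1 sS)); apply: subset_leq_card.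
apply/subsetP => v; rewrite /separator !inE.
by case: (v \in W); case: (v \in A); case: connect; case: (v == s); case: (v \in B).
Qed.

End Separations.

Lemma cyclic_consecutiveE m a b : a < b < m ->
  ((b == a.+1) || (a == 0) && (b == m.-1)) = ((a.+1 %% m == b) || (b.+1 %% m == a)).
Proof.
move=> hab; rewrite (@modn_small a.+1); last by lia.
case: (eqVneq b.+1 m) => [<- | bm].
  by rewrite modnn /= eqxx andbT [a.+1 == b]eq_sym [0 == a]eq_sym.
rewrite modn_small; last by lia.
have -> : (b == m.-1) = false by apply/eqP; lia.
have -> : (b.+1 == a) = false by apply/eqP; lia.
by rewrite andbF !orbF eq_sym.
Qed.

Section ChordalGraph.
Variables (n : nat) (C : rel 'I_n).
Hypotheses (C_sym : symmetric C) (C_irr : irreflexive C) (C_chordal : chordal C).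

Lemma chordless_cycle_length m (h : nat -> 'I_n) : 3 <= m ->
  (forall a b, a < b < m -> h a != h b) ->
  (forall a b, a < b < m -> C (h a) (h b) = (b == a.+1) || (a == 0) && (b == m.-1)) ->
  m = 3.
Proof.
move=> m3 h_inj h_adj; apply: (C_chordal (c := fun t : 'I_m => h t)); split => //.
  move=> a b hab; apply: val_inj; apply/eqP; apply: contraTT (introT eqP hab).
  case: (ltngtP a b) => [ltab|ltba|->] // _.
  - by apply: h_inj; rewrite ltab ltn_ord.
  - by rewrite eq_sym; apply: h_inj; rewrite ltba ltn_ord.
move=> a b; case: (ltngtP a b) => [ltab|ltba|/val_inj <-].
- by rewrite h_adj ?cyclic_consecutiveE // ltab ltn_ord.
- by rewrite C_sym h_adj ?cyclic_consecutiveE ?ltba ?ltn_ord // orbC.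
- rewrite C_irr orbb; apply/esym/eqP.
  case: (eqVneq a.+1 m) => am; [rewrite am modnn | rewrite modn_small];
    have := ltn_ord a; lia.
Qed.

(* Two shortest walks from x to y and back through the two sides of a
   separation close up into a chordless cycle of length at least 4. *)
Section TwoWalks.
Variables (P Q : {set 'I_n}) (x y : 'I_n) (LA LB : nat) (fA fB : nat -> 'I_n).
Hypotheses (walkA : walk_via C P x y LA fA) (shortA : shortest_walk_via C P x y LA).
Hypotheses (walkB : walk_via C Q y x LB fB) (shortB : shortest_walk_via C Q y x LB).
Hypotheses (xy : x != y) (nCxy : ~~ C x y).
Hypotheses (PQ_disj : [disjoint P & Q]) (PQ_sep : {in P & Q, forall u v, ~~ C u v}).

Let LA_gt1 : 1 < LA := walk_length_gt1 walkA xy nCxy.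

Let LB_gt1 : 1 < LB.
Proof. by apply: walk_length_gt1 walkB _ _; rewrite 1?eq_sym // C_sym. Qed.

Let loop t := if t < LA then fA t else fB (t - LA).

Let loopA t : t <= LA -> loop t = fA t.
Proof.
rewrite /loop leq_eqVlt => /orP [/eqP -> | ->] //.
by rewrite ltnn subnn; case: walkA => _ ->; case: walkB.
Qed.

Let loopB t : LA <= t -> loop t = fB (t - LA).
Proof. by rewrite /loop ltnNge => ->. Qed.

Let loop_adj a b : a < b < LA + LB ->
  C (loop a) (loop b) = (b == a.+1) || (a == 0) && (b == (LA + LB).-1) /\ loop a != loop b.
Proof.
move=> hab; have chordA := shortest_walk_chordless walkA shortA.
have chordB := shortest_walk_chordless walkB shortB.
case: (leqP b LA) => hb.
  rewrite !loopA; try lia; have [-> ->] := chordA a b (ltac:(lia)).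
  by rewrite (_ : b == (LA + LB).-1 = false) ?andbF ?orbF //; apply/eqP; lia.
case: (leqP LA a) => ha.
  rewrite !loopB; try lia; have [-> ->] := chordB (a - LA) (b - LA) (ltac:(lia)).
  rewrite (_ : a == 0 = false) ?orbF; first by split=> //; apply/eqP/eqP; lia.
  by apply/eqP; lia.
rewrite loopA ?loopB; try lia.
have Qb : fB (b - LA) \in Q by case: walkB => _ _ _; apply; lia.
case: (posnP a) => [a0 | a_gt0].
  rewrite a0; case: walkA => -> _ _ _; case: walkB => _ <- _ _; rewrite C_sym.
  have [-> ne] := chordB (b - LA) LB (ltac:(lia)).
  split; last by rewrite eq_sym.
  by rewrite /= (_ : b == 1 = false); [apply/eqP/eqP | apply/eqP]; lia.
have Pa : fA a \in P by case: walkA => _ _ _; apply; lia.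
rewrite (negbTE (PQ_sep Pa Qb)) (_ : b == a.+1 = false) ?(_ : a == 0 = false) //;
  try by apply/eqP; lia.
split => //; apply: contraTneq Qb => <-.
by rewrite (disjointFr PQ_disj Pa).
Qed.

Lemma no_chordless_loop : False.
Proof.
suff: LA + LB = 3 by lia.
apply: (chordless_cycle_length (h := loop)); first by lia.
  by move=> a b /loop_adj [].
by move=> a b /loop_adj [].
Qed.

End TwoWalks.

Definition clique (W : {set 'I_n}) := {in W &, forall u w, u != w -> C u w}.

Definition simplicial (W : {set 'I_n}) s :=
  {in W &, forall u w, C u s -> C w s -> u != w -> C u w}.

Definition clique_or_two_simplicial (W : {set 'I_n}) := clique W \/ exists s t,
  [/\ s \in W, t \in W, s != t, ~~ C s t & simplicial W s /\ simplicial W t].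

Lemma separator_neighbour W a b A B s : min_separation C W a b A B ->
  s \in separator W A B -> exists2 u, u \in component C A a & C s u.
Proof.
move=> [sep min] sS.
case: (boolP [exists (u | u \in component C A a), C s u]) => [/exists_inP // | ].
move=> /exists_inPn far.
have [A' [B' [sep' lt']]] := separation_shrink C_sym sep sS far.
by have := min A' B' sep'; rewrite leqNgt lt'.
Qed.

Lemma min_separator_clique W a b A B :
  min_separation C W a b A B -> clique (separator W A B).
Proof.
move=> minsep; have [[_ _ AB _ noAB] _] := minsep.
move=> x y xS yS xy; apply/negPn/negP => nCxy.
have [u1 u1A Cxu1] := separator_neighbour minsep xS.
have [u2 u2A Cyu2] := separator_neighbour minsep yS.
have minsep' := min_separation_sym C_sym minsep.
rewrite separatorC in xS yS.
have [w1 w1B Cxw1] := separator_neighbour minsep' xS.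
have [w2 w2B Cyw2] := separator_neighbour minsep' yS.
have [LA [fA walkA]] := component_walk C_sym u1A u2A Cxu1 (etrans (C_sym _ _) Cyu2).
have [LA' [fA' [walkA' shortA]]] := exists_shortest_walk walkA.
have [LB [fB walkB]] := component_walk C_sym w2B w1B Cyw2 (etrans (C_sym _ _) Cxw1).
have [LB' [fB' [walkB' shortB]]] := exists_shortest_walk walkB.
exact: (no_chordless_loop walkA' shortA walkB' shortB xy nCxy AB noAB).
Qed.

Lemma simplicial_lift W a b A B p : separation C W a b A B -> p \in component C A a ->
  simplicial (component C A a :|: separator W A B) p -> simplicial W p.
Proof.
move=> [_ _ _ _ noAB] pA1 simp_p.
have pA := subsetP (component_sub C A a) p pA1.
suff nbhd u : u \in W -> C u p -> u \in component C A a :|: separator W A B.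
  by move=> u w uW wW Cup Cwp; apply: simp_p; rewrite ?nbhd.
move=> uW; rewrite C_sym => Cpu.
case uB: (u \in B); first by move: (noAB p u pA uB); rewrite Cpu.
case uA: (u \in A); first by rewrite in_setU (component_closed pA1 uA Cpu).
by rewrite in_setU /separator !inE uW uA uB orbT.
Qed.

Lemma min_separation_simplicial W a b A B : min_separation C W a b A B ->
  (forall W' : {set 'I_n}, #|W'| < #|W| -> clique_or_two_simplicial W') ->
  exists2 p, p \in component C A a & simplicial W p.
Proof.
move=> minsep IH; have [[AW BW AB [aA bB] _] _] := minsep.
have A1A := component_sub C A a.
have W1W : #|component C A a :|: separator W A B| < #|W|.
  apply: proper_card; apply/properP; split.
    by rewrite subUset (subset_trans A1A AW) subsetDl.
  exists b; first exact: subsetP BW b bB.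
  by rewrite in_setU /separator !inE bB (disjointFl AB bB) orbT.
suff [p pA1 simp_p] : exists2 p, p \in component C A a &
    simplicial (component C A a :|: separator W A B) p.
  by exists p => //; apply: simplicial_lift (proj1 minsep) pA1 simp_p.
case: (IH _ W1W) => [clq | [s [t [sW1 tW1 st nCst [simp_s simp_t]]]]].
  exists a; first exact: mem_component.
  by move=> u w uW1 wW1 _ _; apply: clq.
case sA1: (s \in component C A a); first by exists s.
case tA1: (t \in component C A a); first by exists t.
move: sW1 tW1; rewrite !in_setU sA1 tA1 => sS tS.
by move: (min_separator_clique minsep sS tS st); rewrite (negbTE nCst).
Qed.

Lemma chordal_dirac W : clique_or_two_simplicial W.
Proof.
move: (leqnn #|W|); move: {2}#|W| => N; elim: N W => [|N IH] W hW.
  by left => u w; move: hW; rewrite leqn0 cards_eq0 => /eqP ->; rewrite inE.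
case: (classic (clique W)) => [clq | nclq]; first by left.
have [a [b [aW bW ab nCab]]] : exists a b, [/\ a \in W, b \in W, a != b & ~~ C a b].
  apply: NNPP => none; apply: nclq => u w uW wW uw.
  by apply/negPn/negP => nCuw; apply: none; exists u, w.
have sep0 : separation C W a b [set a] [set b].
  by split; rewrite ?sub1set ?disjoints1 ?inE // => u v /set1P -> /set1P ->.
have [A [B minsep]] := exists_min_separation sep0.
have IH' (W' : {set 'I_n}) : #|W'| < #|W| -> clique_or_two_simplicial W'.
  by move=> ?; apply: IH; lia.
have [p pA1 simp_p] := min_separation_simplicial minsep IH'.
have [q qB1 simp_q] := min_separation_simplicial (min_separation_sym C_sym minsep) IH'.
have [[AW BW AB _ noAB] _] := minsep.
have pA := subsetP (component_sub C A a) p pA1.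
have qB := subsetP (component_sub C B b) q qB1.
right; exists p, q; split => //.
- exact: subsetP AW p pA.
- exact: subsetP BW q qB.
- by apply: contraTneq pA => ->; rewrite (disjointFl AB qB).
- exact: noAB.
Qed.

Lemma exists_simplicial W : W != set0 -> exists2 s, s \in W & simplicial W s.
Proof.
case/set0Pn => x xW; case: (chordal_dirac W) => [clq | [s [_ [sW _ _ _ [simp_s _]]]]].
  by exists x => // u w uW wW _ _; apply: clq.
by exists s.
Qed.

Definition perfect_elimination_order (W : {set 'I_n}) (r : 'I_n -> nat) :=
  {in W &, injective r} /\
  forall v u w, v \in W -> u \in W -> w \in W -> r u < r v -> r w < r v ->
    C u v -> C w v -> u != w -> C u w.

Lemma perfect_elimination_order_add (W : {set 'I_n}) s r :
  s \in W -> simplicial W s -> perfect_elimination_order (W :\ s) r ->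
  perfect_elimination_order W (fun x => if x == s then (\max_(y in W :\ s) r y).+1 else r x).
Proof.
move=> sW simp_s [r_inj r_peo].
set M := \max_(y in W :\ s) r y.
have rM y : y \in W :\ s -> r y <= M by move=> yW; apply: leq_bigmax_cond.
have inWs y : y \in W -> y != s -> y \in W :\ s by rewrite !inE => -> ->.
clearbody M; split.
  move=> x y xW yW /=.
  case: (eqVneq x s) => [-> | xs]; case: (eqVneq y s) => [-> | ys] // e.
  - by have := rM y (inWs y yW ys); lia.
  - by have := rM x (inWs x xW xs); lia.
  - exact: r_inj (inWs x xW xs) (inWs y yW ys) e.
move=> v u w vW uW wW /=.
case: (eqVneq v s) => [-> | vs].
  case: (eqVneq u s) => [-> | us]; first by rewrite ltnn.
  case: (eqVneq w s) => [-> | ws]; first by rewrite ltnn.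
  by move=> _ _; apply: simp_s.
have := rM v (inWs v vW vs).
case: (eqVneq u s) => [_ | us]; first by lia.
case: (eqVneq w s) => [_ | ws]; first by lia.
by move=> _; apply: r_peo; rewrite ?inWs.
Qed.

Lemma exists_perfect_elimination_order (W : {set 'I_n}) :
  exists r, perfect_elimination_order W r.
Proof.
move: (leqnn #|W|); move: {2}#|W| => N; elim: N W => [|N IH] W hW.
  by exists (fun=> 0); move: hW; rewrite leqn0 cards_eq0 => /eqP ->; split=> ? ?; rewrite inE.
case: (eqVneq W set0) => [-> | W0]; first by apply: IH; rewrite cards0.
have [s sW simp_s] := exists_simplicial W0.
have [|r r_peo] := IH (W :\ s).
  by have := proper_card (properD1 sW); lia.
by eexists; apply: perfect_elimination_order_add r_peo.
Qed.

End ChordalGraph.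

Definition independent n (E : rel 'I_n) (F : {set 'I_n}) :=
  [forall i in F, forall j in F, ~~ E i j].

Lemma independentP n (E : rel 'I_n) (F : {set 'I_n}) :
  reflect {in F &, forall i j, ~~ E i j} (independent E F).
Proof.
apply: (iffP forall_inP) => [ind i j iF jF | ind i iF].
  by have /forall_inP := ind i iF; apply.
by apply/forall_inP => j jF; apply: ind.
Qed.

Lemma independentS n (E : rel 'I_n) (A B : {set 'I_n}) :
  A \subset B -> independent E B -> independent E A.
Proof.
by move=> /subsetP AB /independentP indB; apply/independentP => i j /AB iB /AB; apply: indB.
Qed.

(* [key F] is the interval [U, Z] containing the face F in a partition of the
   independence complex of E into intervals. *)
Definition interval_partition n (E : rel 'I_n) k
    (key : {set 'I_n} -> {set 'I_n} * {set 'I_n}) :=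
  forall F, independent E F ->
    [/\ (key F).1 \subset F, F \subset (key F).2, independent E (key F).2,
        #|(key F).1| <= k &
        forall F' : {set 'I_n},
          (key F).1 \subset F' -> F' \subset (key F).2 -> key F' = key F].

Section CochordalPartition.
Variables (n : nat) (H : rel 'I_n) (r : 'I_n -> nat).
Hypotheses (H_sym : symmetric H) (H_irr : irreflexive H).
Hypothesis r_peo : perfect_elimination_order (compl_graph H) [set: 'I_n] r.

Definition earlier_nbhd v := v |: [set u | (r u < r v) && compl_graph H u v].

Definition latest_vertex_key (F : {set 'I_n}) :=
  if [pick x in F] is Some x0 then
    let v := [arg max_(i > x0 in F) r i] in ([set v], earlier_nbhd v)
  else (set0, set0).

Lemma earlier_nbhd_independent v : independent H (earlier_nbhd v).
Proof.
have [_ peo] := r_peo.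
apply/independentP => x y; rewrite !inE.
case/predU1P => [-> | /andP [xv Cxv]]; case/predU1P => [-> | /andP [yv Cyv]].
- by rewrite H_irr.
- by move: Cyv; rewrite /compl_graph H_sym => /andP [].
- by move: Cxv => /andP [].
- case: (eqVneq x y) => [-> | xy]; first by rewrite H_irr.
  by have /andP [] := peo v x y (in_setT _) (in_setT _) (in_setT _) xv yv Cxv Cyv xy.
Qed.

Lemma latest_vertex_keyE (F : {set 'I_n}) v : v \in F -> F \subset earlier_nbhd v ->
  latest_vertex_key F = ([set v], earlier_nbhd v).
Proof.
move=> vF /subsetP Fv; rewrite /latest_vertex_key.
case: pickP => [x0 x0F | F0]; last by rewrite F0 in vF.
case: arg_maxnP => // w wF w_max.
have /Fv := wF; rewrite !inE => /predU1P [-> // | /andP [wv _]].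
by have := w_max v vF; lia.
Qed.

Lemma latest_vertex_key_partition : interval_partition H 1 latest_vertex_key.
Proof.
have [r_inj _] := r_peo.
move=> F indF; case: (pickP [in F]) => [x0 x0F | F0].
  case: (arg_maxnP r x0F) => v vF v_max.
  have Fv : F \subset earlier_nbhd v.
    apply/subsetP => y yF; rewrite !inE; case: (eqVneq y v) => //= yv.
    have ryv : r y < r v.
      rewrite ltn_neqAle (v_max y yF : r y <= r v) andbT.
      by apply: contra yv => /eqP/r_inj ->; rewrite ?inE.
    by rewrite ryv /compl_graph yv (independentP _ _ indF).
  rewrite (latest_vertex_keyE vF Fv); split => //=.
  - by rewrite sub1set.
  - exact: earlier_nbhd_independent.
  - by rewrite cards1.
  - by move=> F' vF' F'v; apply: latest_vertex_keyE => //; rewrite -sub1set.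
have F_empty : F = set0 by apply/setP => x; rewrite inE F0.
have key0 : latest_vertex_key set0 = (set0, set0).
  by rewrite /latest_vertex_key; case: pickP => // x; rewrite inE.
rewrite F_empty key0; split; rewrite ?sub0set ?cards0 //.
  by apply/independentP => i j; rewrite inE.
by move=> F' _; rewrite subset0 => /eqP ->.
Qed.

End CochordalPartition.

Lemma cochordal_interval_partition n (H : rel 'I_n) :
  simple_graph H -> cochordal H -> exists key, interval_partition H 1 key.
Proof.
move=> [H_sym /(_ _)/negbTE H_irr] H_cochordal.
have C_sym : symmetric (compl_graph H).
  by move=> x y; rewrite /compl_graph eq_sym H_sym.
have C_irr : irreflexive (compl_graph H) by move=> x; rewrite /compl_graph eqxx.
have [r r_peo] := exists_perfect_elimination_order C_sym C_irr H_cochordal [set: 'I_n].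
by exists (latest_vertex_key H r); apply: latest_vertex_key_partition.
Qed.

Lemma leq_card_bigcup (I T : finType) (P : pred I) (A : I -> {set T}) :
  #|\bigcup_(i | P i) A i| <= \sum_(i | P i) #|A i|.
Proof.
elim/big_rec2: _ => [|i s X _ le_X]; first by rewrite cards0.
by apply: leq_trans (leq_card_setU _ _) _; rewrite leq_add2l.
Qed.

Lemma interval_partition_cover n (E : rel 'I_n) k (H : 'I_k -> rel 'I_n)
    (keys : 'I_k -> {set 'I_n} -> {set 'I_n} * {set 'I_n}) :
  (forall l, subgraph (H l) E) -> (forall i j, E i j -> exists l, H l i j) ->
  (forall l, interval_partition (H l) 1 (keys l)) ->
  interval_partition E k
    (fun F => (\bigcup_(l < k) (keys l F).1, \bigcap_(l < k) (keys l F).2)).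
Proof.
move=> HE cover part F indF.
have indH l : independent (H l) F.
  apply/independentP => i j iF jF.
  exact: contraNN (HE l i j) (independentP _ _ indF i j iF jF).
have part_F l := part l F (indH l).
split => /=.
- by apply/bigcupsP => l _; have [] := part_F l.
- by apply/bigcapsP => l _; have [] := part_F l.
- apply/independentP => i j /bigcapP iZ /bigcapP jZ; apply/negP => /cover [l Hij].
  have [_ _ /independentP indZ _ _] := part_F l.
  by move: (indZ i j (iZ l isT) (jZ l isT)); rewrite Hij.
- apply: leq_trans (leq_card_bigcup _ _) _.
  rewrite -[X in _ <= X]card_ord -sum1_card; apply: leq_sum => l _.
  by have [] := part_F l.
- move=> F' UF' F'Z; suff keysF' l : keys l F' = keys l F.
    by congr (_, _); apply: eq_bigr => l _; rewrite keysF'.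
  have [_ _ _ _ ->] // := part_F l.
    exact: subset_trans (bigcup_sup l isT) UF'.
  exact: subset_trans F'Z (bigcap_inf l isT).
Qed.

(* Imported only here: mpoly's [symmetric] would shadow the relation property
   used above. *)
From mathcomp Require Import mpoly.
Import GRing.Theory.

Section Monomials.
Variable n : nat.

Definition mnm_support (m : 'X_{1..n}) : {set 'I_n} := [set i | m i != 0].

Definition sqf_mnm (U : {set 'I_n}) : 'X_{1..n} := (\sum_(i in U) U_(i))%MM.

Lemma sqf_mnmE (U : {set 'I_n}) i : sqf_mnm U i = (i \in U).
Proof.
rewrite /sqf_mnm mnm_sumE; case: (boolP (i \in U)) => iU.
  rewrite (bigD1 i) //= mnm1E eqxx big1 // => j /andP [_ ji].
  by rewrite mnm1E (negbTE ji).
by rewrite big1 // => j jU; rewrite mnm1E; case: eqP => // ji; rewrite -ji jU in iU.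
Qed.

Lemma mnm_supportD m1 m2 : mnm_support (m1 + m2) = mnm_support m1 :|: mnm_support m2.
Proof. by apply/setP => i; rewrite !inE mnmDE addn_eq0 negb_and. Qed.

Lemma sqf_mnmK (U : {set 'I_n}) : mnm_support (sqf_mnm U) = U.
Proof. by apply/setP => i; rewrite !inE sqf_mnmE; case: (i \in U). Qed.

Lemma sqf_mnm_le (U : {set 'I_n}) m : U \subset mnm_support m -> (sqf_mnm U <= m)%MM.
Proof.
move/subsetP => Um; apply/mnm_lepP => i; rewrite sqf_mnmE.
by case: (boolP (i \in U)) => // /Um; rewrite inE lt0n.
Qed.

Lemma mnm_support_le m1 m2 : (m1 <= m2)%MM -> mnm_support m1 \subset mnm_support m2.
Proof.
move/mnm_lepP => le12; apply/subsetP => i; rewrite !inE -!lt0n => m1i.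
exact: leq_trans m1i (le12 i).
Qed.

Variable K : fieldType.
Local Open Scope ring_scope.

Lemma sqf_monomialE (U : {set 'I_n}) : sqf_monomial K U = 'X_[sqf_mnm U].
Proof. by rewrite /sqf_monomial (big_morph _ (@mpolyXD _ _) (@mpolyX0 _ _)). Qed.

Lemma mcoeffXM (u m : 'X_{1..n}) (g : {mpoly K[n]}) :
  ('X_[u] * g)@_m = if (u <= m)%MM then g@_(m - u) else 0.
Proof.
rewrite mulrC; case: ifP => um; first by rewrite -{1}(submK um) addmC mcoeffMX.
apply: memN_msupp_eq0; rewrite (perm_mem (msuppMX _ _)).
by apply/mapP => [[m' _ def_m]]; rewrite def_m lem_addr in um.
Qed.

Lemma in_subring0 Z : in_subring Z (0 : {mpoly K[n]}).
Proof. by move=> m; rewrite mcoeff_msupp mcoeff0 eqxx. Qed.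

Lemma in_subringD Z (p q : {mpoly K[n]}) :
  in_subring Z p -> in_subring Z q -> in_subring Z (p + q).
Proof. by move=> Zp Zq m /msuppD_le; rewrite mem_cat => /orP [/Zp | /Zq]. Qed.

Lemma in_subringZ Z c (p : {mpoly K[n]}) : in_subring Z p -> in_subring Z (c *: p).
Proof. by move=> Zp m /msuppZ_le /Zp. Qed.

Lemma in_subringX (Z : {set 'I_n}) m :
  mnm_support m \subset Z -> in_subring Z ('X_[m] : {mpoly K[n]}).
Proof.
move=> /subsetP mZ m'; rewrite msuppX inE => /eqP -> i; apply: contraNeq => mi.
by apply: mZ; rewrite inE.
Qed.

End Monomials.

Section EdgeIdeal.
Variables (K : fieldType) (n : nat) (E : rel 'I_n).
Local Open Scope ring_scope.
Implicit Types (f g p : {mpoly K[n]}) (m : 'X_{1..n}).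

Lemma edge_ideal0 : in_edge_ideal E (0 : {mpoly K[n]}).
Proof.
by exists (fun _ _ => 0); rewrite big1 // => i _; rewrite big1 // => j _; rewrite mul0r.
Qed.

Lemma edge_idealD f g : in_edge_ideal E f -> in_edge_ideal E g -> in_edge_ideal E (f + g).
Proof.
move=> [hf ->] [hg ->]; exists (fun i j => hf i j + hg i j).
rewrite -big_split; apply: eq_bigr => i _; rewrite -big_split.
by apply: eq_bigr => j _; rewrite mulrDl.
Qed.

Lemma edge_ideal_sum (I : Type) (r : seq I) (P : pred I) (F : I -> {mpoly K[n]}) :
  (forall i, P i -> in_edge_ideal E (F i)) -> in_edge_ideal E (\sum_(i <- r | P i) F i).
Proof.
move=> FE; elim/big_rec: _ => [|i f Pi fE]; first exact: edge_ideal0.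
by apply: edge_idealD => //; apply: FE.
Qed.

Lemma edge_ideal_edge p i j : E i j -> in_edge_ideal E (p * ('X_i * 'X_j)).
Proof.
move=> Eij; exists (fun a b => if (a == i) && (b == j) then p else 0).
rewrite (bigD1 i) //= (bigD1 j) //= !eqxx big1 => [|b /andP [_ /negbTE ->]]; last first.
  by rewrite andbF mul0r.
rewrite big1 => [|a /negbTE ai]; first by rewrite !addr0.
by rewrite big1 // => b _; rewrite ai mul0r.
Qed.

Lemma edge_ideal_mcoeff f m :
  in_edge_ideal E f -> independent E (mnm_support m) -> f@_m = 0.
Proof.
move=> [h ->] /independentP ind; rewrite raddf_sum big1 // => i _ /=.
rewrite raddf_sum big1 // => j Eij /=.
rewrite -mpolyXD mulrC mcoeffXM; case: ifP => // /mnm_lepP le_m.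
have := le_m i; have := le_m j; rewrite !mnmDE !mnm1E !eqxx => mj mi.
have iS : i \in mnm_support m by rewrite inE -lt0n; lia.
have jS : j \in mnm_support m by rewrite inE -lt0n; lia.
by rewrite (negbTE (ind i j iS jS)) in Eij.
Qed.

Hypothesis E_irr : irreflexive E.

Lemma edge_ideal_monomial c m :
  ~~ independent E (mnm_support m) -> in_edge_ideal E (c *: 'X_[m] : {mpoly K[n]}).
Proof.
case/forall_inPn => i; rewrite inE => mi /forall_inPn [j]; rewrite inE => mj /negPn Eij.
have ij : i != j by apply: contraTneq Eij => ->; rewrite E_irr.
have le_m : (U_(i) + U_(j) <= m)%MM.
  apply/mnm_lepP => a; rewrite mnmDE !mnm1E.
  case: (eqVneq i a) => [ia | _]; case: (eqVneq j a) => [ja | _] //=.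
  - by rewrite ia -ja eqxx in ij.
  - by rewrite -ia lt0n.
  - by rewrite -ja lt0n.
by rewrite -(submK le_m) !mpolyXD scalerAl; apply: edge_ideal_edge.
Qed.

End EdgeIdeal.

Section StanleyOfIntervals.
Variables (K : fieldType) (n : nat) (E : rel 'I_n) (k : nat).
Variable key : {set 'I_n} -> {set 'I_n} * {set 'I_n}.
Hypotheses (E_irr : irreflexive E) (key_part : interval_partition E k key).
Local Open Scope ring_scope.

Definition intervals := undup [seq key F | F <- enum [pred F | independent E F]].

Local Notation interval l := (nth (set0, set0) intervals l).

Lemma mem_intervals F : independent E F -> key F \in intervals.
Proof. by move=> indF; rewrite mem_undup; apply: map_f; rewrite mem_enum. Qed.

Lemma intervalP (l : 'I_(size intervals)) :
  exists2 F, independent E F & interval l = key F.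
Proof.
have /mapP [F] : interval l \in [seq key F | F <- enum [pred F | independent E F]].
  by rewrite -mem_undup mem_nth.
by rewrite mem_enum => indF ->; exists F.
Qed.

Lemma interval_keyE (l : 'I_(size intervals)) (F : {set 'I_n}) :
  (interval l).1 \subset F -> F \subset (interval l).2 -> key F = interval l.
Proof. by have [F0 /key_part [_ _ _ _ stable] ->] := intervalP l; apply: stable. Qed.

Lemma interval_sub (l : 'I_(size intervals)) : (interval l).1 \subset (interval l).2.
Proof. by have [F /key_part [UF FZ _ _ _] ->] := intervalP l; apply: subset_trans FZ. Qed.

Lemma interval_independent (l : 'I_(size intervals)) : independent E (interval l).2.
Proof. by have [F /key_part [] _ _ ? _ _ ->] := intervalP l. Qed.

Lemma interval_inj (l l' : 'I_(size intervals)) : interval l = interval l' -> l = l'.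
Proof.
move=> eq_ll'; apply: val_inj; apply/eqP.
by rewrite -(nth_uniq (set0, set0) (ltn_ord l) (ltn_ord l') (undup_uniq _)) eq_ll'.
Qed.

Lemma sum_interval_key F (x : {mpoly K[n]}) : independent E F ->
  \sum_(l : 'I_(size intervals)) (if key F == interval l then x else 0) = x.
Proof.
move=> indF; have l_lt : (index (key F) intervals < size intervals)%N.
  by rewrite index_mem mem_intervals.
rewrite -big_mkcond (big_pred1 (Ordinal l_lt)) // => l /=.
apply/eqP/eqP => [eq_l | ->]; last by rewrite nth_index ?mem_intervals.
by apply: val_inj; rewrite /= eq_l index_uniq ?undup_uniq.
Qed.

Lemma stanley_span (f : {mpoly K[n]}) :
  exists g : 'I_(size intervals) -> {mpoly K[n]},
    (forall l : 'I_(size intervals), in_subring (interval l).2 (g l)) /\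
    in_edge_ideal E
      (f - \sum_(l : 'I_(size intervals)) sqf_monomial K (interval l).1 * g l).
Proof.
(* Each monomial of f with independent support is sent to the interval of its
   support; the other monomials lie in I(G). *)
pose P m (l : 'I_(size intervals)) :=
  independent E (mnm_support m) && (key (mnm_support m) == interval l).
pose g l := \sum_(m <- msupp f | P m l) f@_m *: 'X_[m - sqf_mnm (interval l).1].
exists g; split.
  move=> l; apply: (big_ind (in_subring _)) => [|p q|m /andP [indm /eqP km]].
  - exact: in_subring0.
  - exact: in_subringD.
  apply/in_subringZ/in_subringX; apply: subset_trans (mnm_support_le (lem_subr _ _)) _.
  by have [_ ? _ _ _] := key_part indm; rewrite -km.
have -> : \sum_(l : 'I_(size intervals)) sqf_monomial K (interval l).1 * g l =
    \sum_(m <- msupp f | independent E (mnm_support m)) f@_m *: 'X_[m].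
  rewrite (eq_bigr (fun l => \sum_(m <- msupp f) if P m l then f@_m *: 'X_[m] else 0));
    last first.
    move=> l _; rewrite mulr_sumr [LHS]big_mkcond; apply: eq_bigr => m _.
    case: ifP => // /andP [indm /eqP km].
    have [Um _ _ _ _] := key_part indm; rewrite km in Um.
    by rewrite sqf_monomialE -scalerAr -mpolyXD addmC submK // sqf_mnm_le.
  rewrite exchange_big [RHS]big_mkcond; apply: eq_bigr => m _ /=.
  case: ifP => indm; last by apply: big1 => l _; rewrite /P indm.
  by rewrite /P indm /=; apply: sum_interval_key.
rewrite {1}(mpolyE f) (bigID (fun m => independent E (mnm_support m))) /= addrC addrK.
by apply: edge_ideal_sum => m; apply: edge_ideal_monomial.
Qed.

Lemma stanley_free (g : 'I_(size intervals) -> {mpoly K[n]}) :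
  (forall l : 'I_(size intervals), in_subring (interval l).2 (g l)) ->
  in_edge_ideal E
    (\sum_(l : 'I_(size intervals)) sqf_monomial K (interval l).1 * g l) ->
  forall l : 'I_(size intervals), g l = 0.
Proof.
move=> g_sub g_ideal l; apply/mpolyP => m'; rewrite mcoeff0.
case: (boolP (m' \in msupp (g l))) => m'g; last exact: memN_msupp_eq0.
have suppZ l' m'' : m'' \in msupp (g l') -> mnm_support m'' \subset (interval l').2.
  move=> m''g; apply/subsetP => i; rewrite inE; apply: contraR => iZ.
  by apply/eqP; apply: g_sub m''g i iZ.
(* Only g l contributes to the coefficient of X^m: a contribution of g l'
   would force key (mnm_support m) = interval l'. *)
pose m := (sqf_mnm (interval l).1 + m')%MM.
have supp_m : mnm_support m = (interval l).1 :|: mnm_support m'.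
  by rewrite mnm_supportD sqf_mnmK.
have mZ : mnm_support m \subset (interval l).2.
  by rewrite supp_m subUset interval_sub suppZ.
have key_m : key (mnm_support m) = interval l.
  by apply: interval_keyE => //; rewrite supp_m subsetUl.
have := edge_ideal_mcoeff g_ideal (independentS mZ (interval_independent l)).
rewrite raddf_sum (bigD1 l) //= big1 => [|l' l'l].
  by rewrite addr0 sqf_monomialE mcoeffXM lem_addr /m addmC addmK.
rewrite sqf_monomialE mcoeffXM; case: ifP => // le_m.
case: (boolP ((m - sqf_mnm (interval l').1)%MM \in msupp (g l'))) => m_g;
  last exact: memN_msupp_eq0.
suff /interval_inj eq_l : interval l' = interval l by rewrite eq_l eqxx in l'l.
rewrite -key_m; apply/esym/interval_keyE.
  by rewrite -{1}(sqf_mnmK (interval l').1); apply: mnm_support_le.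
by rewrite -(submK le_m) mnm_supportD subUset suppZ // sqf_mnmK interval_sub.
Qed.

Lemma stanley_reg_intervals : (stanley_reg intervals <= k)%N.
Proof.
apply/bigmax_leqP_seq => U; rewrite mem_undup => /mapP [F]; rewrite mem_enum => indF -> _.
by have [] := key_part indF.
Qed.

End StanleyOfIntervals.

Lemma interval_partition_stanley (K : fieldType) n (E : rel 'I_n) k key :
  irreflexive E -> interval_partition E k key ->
  exists D, stanley_decomposition K E D /\ (stanley_reg D <= k)%N.
Proof.
move=> E_irr key_part; exists (intervals E key); split; last exact: stanley_reg_intervals.
split; [exact: interval_sub key_part | exact: stanley_span E_irr key_part |
        exact: stanley_free key_part].
Qed.

Theorem theorem5p6 (K : fieldType) (n : nat) (E : rel 'I_n) :
  simple_graph E ->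
  forall (k : nat) (H : 'I_k -> rel 'I_n),
    cochordal_cover E H ->
    exists D : seq ({set 'I_n} * {set 'I_n}),
      stanley_decomposition K E D /\ (stanley_reg D <= k)%N.
Proof.
move=> [_ E_irr] k H [H_cochordal cover].
have part l : exists key, interval_partition (H l) 1 key.
  by have [H_simple [_ H_co]] := H_cochordal l; apply: cochordal_interval_partition.
have [keys keys_part] := fin_all_exists part.
have HE l : subgraph (H l) E by have [_ []] := H_cochordal l.
exact: interval_partition_stanley (fun i => negbTE (E_irr i))
  (interval_partition_cover HE cover keys_part).
Qed.
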